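(* Let $p$ be a prime, $m=p^2$, and $n,k$ positive integers with $(m,k-1)=1$ and $n=\mathrm{ind}_m(k)$; let $G=G(p^2,n,k)=\langle a,b;\ a^{p^2}=1,\ b^n=1,\ b^{-1}ab=a^k\rangle$. Then the right commutation semigroup $\mathrm{P}(G)$ and the left commutation semigroup $\Lambda(G)$ are complete, i.e. $\Sigma_G(R)$ and $\Sigma_G(L)$ are complete, where $R=\{k^j-1 \bmod m: j\in\mathbb{Z}_n\}$ and $L=\{1-k^j \bmod m: j\in\mathbb{Z}_n\}$.
   Context: $\mathrm{ind}_m(k)$ is the least positive integer $d$ with $k^d\equiv 1\pmod m$. Elements of $G$ are written uniquely as $a^ib^j$, $i\in\mathbb{Z}_m$, $j\in\mathbb{Z}_n$; $k_t=k^t-1\pmod m$. Commutators are $[x,y]=x^{-1}y^{-1}xy$; for $g\in G$, $\rho(g),\lambda(g):G\to G$ are $(x)\rho(g)=[x,g]$ and $(x)\lambda(g)=[g,x]$; maps are written on the right and composed left to right. $\mathrm{P}(G)$ and $\Lambda(G)$ are the semigroups under composition generated by $\{\rho(g)\}$ and $\{\lambda(g)\}$; they equal $\Sigma_G(R)$ and $\Sigma_G(L)$ respectively. For $x,y\in\mathbb{Z}_m$, $\mu(x,y):G\to G$ is $(a^ib^j)\mu(x,y)=a^{xik^j-yk_j}$, and $C(x,y)=\{\mu(x,yz):z\in\mathbb{Z}_m\}$. For $S\subseteq\mathbb{Z}_m$, $I(S)$ is the set of elements of $S$ invertible in $\mathbb{Z}_m$, and $S^*$ is the multiplicative subsemigroup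 generated by $S$. A base is $S\subseteq\mathbb{Z}_m$ with $0\in S$, $I(S)\ne\varnothing$. $\Sigma_G(S)$ is the semigroup generated by $\{\mu(s,z):s\in S,z\in\mathbb{Z}_m\}$. For $x\in S^*$, $Y(x)=\{s^*z: s^*\in S^*, z\in\mathbb{Z}_m, \exists s\in S,\ x\equiv ss^*\pmod m\}$; the $x$-family $\{C(x,y):y\in Y(x)\}$ is complete if it contains $C(x,1)$, and $\Sigma_G(S)$ is complete if every $x$-family ($x\in S^*$) is complete. *)

From mathcomp Require Import all_boot all_order all_algebra.
Unset Printing Implicit Defensive.
Import GRing.Theory.
Local Open Scope ring_scope.

Definition is_ind (m k d : nat) : Prop :=
  (0 < d)%N /\ (k ^ d = 1 %[mod m])%N /\
  (forall d' : nat, (0 < d')%N -> (k ^ d' = 1 %[mod m])%N -> (d <= d')%N).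

(* An element a^i b^j of G(m,n,k) is represented by the pair (i, j),
   i : 'Z_m, j : 'I_n (the unique normal form).  A map G -> G whose
   values lie in <a> is represented by i j |-> exponent of a. *)

Definition kt (m k : nat) (t : nat) : 'Z_m := (k%:R) ^+ t - 1.

(* (a^i b^j) mu(x,y) = a^(x i k^j - y k_j) *)
Definition mu (m n k : nat) (x y : 'Z_m) (i : 'Z_m) (j : 'I_n) : 'Z_m :=
  x * i * (k%:R) ^+ j - y * kt m k j.

(* C(x,y1) = C(x,y2) as sets of maps G -> G, where
   C(x,y) = { mu(x, y z) : z in Z_m } *)
Definition C_eq (m n k : nat) (x y1 y2 : 'Z_m) : Prop :=
  (forall z : 'Z_m, exists z' : 'Z_m,
      forall i j, mu m n k x (y1 * z) i j = mu m n k x (y2 * z') i j) /\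
  (forall z' : 'Z_m, exists z : 'Z_m,
      forall i j, mu m n k x (y2 * z') i j = mu m n k x (y1 * z) i j).

Inductive in_star (m : nat) (S : 'Z_m -> Prop) : 'Z_m -> Prop :=
  | star_gen s : S s -> in_star m S s
  | star_mul a b : in_star m S a -> in_star m S b -> in_star m S (a * b).

Definition in_Y (m : nat) (S : 'Z_m -> Prop) (x y : 'Z_m) : Prop :=
  exists (st z : 'Z_m), in_star m S st /\ (exists s, S s /\ x = s * st) /\ y = st * z.

(* the x-family {C(x,y) : y in Y(x)} is complete: it contains C(x,1) *)
Definition family_complete (m n k : nat) (S : 'Z_m -> Prop) (x : 'Z_m) : Prop :=
  exists y : 'Z_m, in_Y m S x y /\ C_eq m n k x y 1.

Definition Sigma_complete (m n k : nat) (S : 'Z_m -> Prop) : Prop :=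
  forall x : 'Z_m, in_star m S x -> family_complete m n k S x.

Definition Rset (m n k : nat) : 'Z_m -> Prop :=
  fun r => exists j : 'I_n, r = (k%:R) ^+ j - 1.
Definition Lset (m n k : nat) : 'Z_m -> Prop :=
  fun r => exists j : 'I_n, r = 1 - (k%:R) ^+ j.

From mathcomp Require Import all_boot all_order all_algebra all_fingroup.
From mathcomp Require Import ring.
Local Open Scope ring_scope.
Import GRing.Theory.

Set Implicit Arguments.
Unset Strict Implicit.

(* In Z_(p^2) the non-units form the ideal (p), whose square is zero.  So if
   the base S contains 0 and a unit, every x in S^* factors as x = s u with
   s in S and u a unit lying in S^*: a product with two non-unit factors is
   0 = 0 * 1, and 1 is in S^* as a power of the unit of S.  Then 1 = u u^-1
   lies in Y(x), so the x-family contains C(x, 1) itself.  Both R and L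
   contain 0 (j = 0) and the unit +-(k - 1) (j = 1; n > 1 because k - 1 is
   prime to p^2). *)

Lemma unitr_expr_eq1 (R : finUnitRingType) (u : R) :
  u \is a GRing.unit -> exists2 N, (0 < N)%N & u ^+ N = 1.
Proof.
move=> Uu; pose w : {unit R} := Sub u Uu.
exists #[w]%g; first exact: order_gt0.
have := congr1 val (expg_order w).
by rewrite FinRing.val_unitX FinRing.val_unit1.
Qed.

Lemma Zp_sqr_nonunit_dvd (p : nat) : prime p ->
  forall a : 'Z_(p ^ 2), a \isn't a GRing.unit -> (p %| a)%N.
Proof.
move=> pp a; have m_gt1 : (1 < p ^ 2)%N by rewrite (ltn_exp2l 0 2) ?prime_gt1.
rewrite -{1}(natr_Zp a) unitZpE // coprime_pexpl //.
by rewrite prime_coprime // negbK.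
Qed.

Lemma Zp_sqr_nonunit_mul0 (p : nat) : prime p -> forall a b : 'Z_(p ^ 2),
  a \isn't a GRing.unit -> b \isn't a GRing.unit -> a * b = 0.
Proof.
move=> pp a b /(Zp_sqr_nonunit_dvd pp) pa /(Zp_sqr_nonunit_dvd pp) pb.
have m_gt1 : (1 < p ^ 2)%N by rewrite (ltn_exp2l 0 2) ?prime_gt1.
have m_dvd_ab : (p ^ 2 %| a * b)%N.
  by apply: dvdn_trans (dvdn_mul pa pb); rewrite mulnn.
by rewrite -(natr_Zp a) -(natr_Zp b) -natrM -Zp_nat_mod // (eqP m_dvd_ab).
Qed.

Lemma coprime_pred_ind_gt1 (m k n : nat) : (1 < m)%N -> (0 < k)%N ->
  coprime m (k - 1) -> (k ^ n = 1 %[mod m])%N -> (0 < n)%N -> (1 < n)%N.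
Proof.
move=> m_gt1 k_gt0 cop kn1; case: n kn1 => [|[|n]] // /esym k1 _.
have m_dvd : (m %| k - 1)%N by rewrite -eqn_mod_dvd // k1 expn1.
move: (coprime_dvdr m_dvd cop); rewrite /coprime gcdnn => /eqP m1.
by rewrite m1 in m_gt1.
Qed.

Section CompleteBase.

Variables (m : nat) (S : 'Z_m -> Prop).

Lemma in_star_expr (u : 'Z_m) (N : nat) :
  in_star m S u -> (0 < N)%N -> in_star m S (u ^+ N).
Proof.
move=> Su; elim: N => // -[_ _|N IH _]; first by rewrite expr1.
by rewrite exprS; apply: star_mul => //; apply: IH.
Qed.

Lemma in_star1 (u : 'Z_m) : S u -> u \is a GRing.unit -> in_star m S 1.
Proof.
move=> Su /unitr_expr_eq1[N N_gt0 <-].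
by apply: in_star_expr => //; apply: star_gen.
Qed.

Hypothesis nonunit_mul0 : forall a b : 'Z_m,
  a \isn't a GRing.unit -> b \isn't a GRing.unit -> a * b = 0.
Hypothesis S0 : S 0.
Variable u : 'Z_m.
Hypotheses (Su : S u) (Uu : u \is a GRing.unit).

Lemma in_star_unit_factor (x : 'Z_m) : in_star m S x ->
  exists s v, [/\ S s, in_star m S v, v \is a GRing.unit & x = s * v].
Proof.
have S1 := in_star1 Su Uu.
elim=> [s Ss | _ _ _ [s1 [u1 [Ss1 Su1 Uu1 ->]]] _ [s2 [u2 [Ss2 Su2 Uu2 ->]]]].
  by exists s, 1; rewrite mulr1 unitr1.
have Su1au2 : forall a, S a -> in_star m S (u1 * a * u2).
  by move=> a Sa; do 2 apply: star_mul => //; apply: star_gen.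
have [Us2 | NUs2] := boolP (s2 \is a GRing.unit).
  exists s1, (u1 * s2 * u2); split; [by [] | exact: Su1au2 | | ring].
  by rewrite !unitrM Us2 Uu1 Uu2.
have [Us1 | NUs1] := boolP (s1 \is a GRing.unit).
  exists s2, (u1 * s1 * u2); split; [by [] | exact: Su1au2 | | ring].
  by rewrite !unitrM Us1 Uu1 Uu2.
exists 0, 1; split; rewrite ?unitr1 //.
by rewrite mulr1 mulrACA (nonunit_mul0 NUs1 NUs2) mul0r.
Qed.

Lemma Sigma_complete_of_unit (n k : nat) : Sigma_complete m n k S.
Proof.
move=> x /in_star_unit_factor[s [v [Ss Sv Uv ->]]].
exists 1; split; last by split=> z; exists z.
by exists v, v^-1; split=> //; split; [exists s | rewrite divrr].
Qed.

End CompleteBase.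

Theorem theorem6p3 (p n k : nat) :
  prime p -> (0 < n)%N -> (0 < k)%N ->
  coprime (p ^ 2) (k - 1) ->
  is_ind (p ^ 2) k n ->
  Sigma_complete (p ^ 2) n k (Rset (p ^ 2) n k) /\ Sigma_complete (p ^ 2) n k (Lset (p ^ 2) n k).
Proof.
move=> pp n_gt0 k_gt0 cop [_ [kn1 _]].
have m_gt1 : (1 < p ^ 2)%N by rewrite (ltn_exp2l 0 2) ?prime_gt1.
have n_gt1 := coprime_pred_ind_gt1 m_gt1 k_gt0 cop kn1 n_gt0.
pose j0 := Ordinal n_gt0; pose j1 := Ordinal n_gt1.
have k1_unit : (k%:R : 'Z_(p ^ 2)) ^+ j1 - 1 \is a GRing.unit.
  have -> : (k%:R : 'Z_(p ^ 2)) ^+ j1 - 1 = (k - 1)%:R by rewrite expr1 natrB.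
  by rewrite unitZpE.
have nonunit_mul0 := Zp_sqr_nonunit_mul0 pp.
split.
- apply: (Sigma_complete_of_unit nonunit_mul0 _ _ k1_unit).
  + by exists j0; rewrite expr0 subrr.
  + by exists j1.
- apply: (Sigma_complete_of_unit nonunit_mul0 _ _ (_ : - _ \is a GRing.unit)).
  + by exists j0; rewrite expr0 subrr.
  + by exists j1; rewrite -opprB.
  + by rewrite unitrN.
Qed.
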